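(* Let $g,h>\tfrac12$, let $\mathcal{D}=((d_1,t_1),\ldots,(d_M,t_M))$ be an ordered list of pairwise distinct seed labels for the parameters $(g,h)$, and let $\mathcal{D}'=((d_1,\bar t_1),\ldots,(d_M,\bar t_M))$, where $\bar{\mathrm{I}}=\mathrm{II}$ and $\bar{\mathrm{II}}=\mathrm{I}$ (so $\mathcal{D}'$ is a list of seed labels for the parameters $(h,g)$). Then for every $n\in\mathbb{Z}_{\ge0}$ and $-1<\eta<1$, $$P_{\mathcal{D},n}\big(-\eta;(g,h)\big)=(-1)^{n+\frac12M(M+1)+\sum_{k=1}^Md_k}\,P_{\mathcal{D}',n}\big(\eta;(h,g)\big),$$ $$\Xi_{\mathcal{D}}\big(-\eta;(g,h)\big)=(-1)^{\frac12M(M-1)+\sum_{k=1}^Md_k}\,\Xi_{\mathcal{D}'}\big(\eta;(h,g)\big).$$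
   Context: $[a]'$ denotes the greatest integer strictly less than $a$; $(a)_k=a(a+1)\cdots(a+k-1)$, $(a)_0=1$. For real $\alpha,\beta$, $m\in\mathbb{Z}_{\ge0}$, $P^{(\alpha,\beta)}_m(\eta)=\frac{1}{m!}\sum_{k=0}^m\frac{(-m)_k(m+\alpha+\beta+1)_k(\alpha+k+1)_{m-k}}{k!}\big(\frac{1-\eta}{2}\big)^k$. For parameters $(g,h)$ with $g,h>\frac12$, a seed label is a pair $(\mathrm{v},t)$, $t\in\{\mathrm{I},\mathrm{II}\}$, with $\mathrm{v}\in\{0,\ldots,[h-\frac12]'\}$ if $t=\mathrm{I}$ and $\mathrm{v}\in\{0,\ldots,[g-\frac12]'\}$ if $t=\mathrm{II}$. For $-1<\eta<1$ let $\mu_{(\mathrm{v},\mathrm{I})}(\eta;(g,h))=\big(\frac{1+\eta}{2}\big)^{\frac12-h}P^{(g-\frac12,\frac12-h)}_{\mathrm{v}}(\eta)$, $\mu_{(\mathrm{v},\mathrm{II})}(\eta;(g,h))=\big(\frac{1-\eta}{2}\big)^{\frac12-g}P^{(\frac12-g,h-\frac12)}_{\mathrm{v}}(\eta)$, $P_n(\eta;(g,h))=P^{(g-\frac12,h-\frac12)}_n(\eta)$, and $\mathrm{W}[f_1,\ldots,f_m](\eta)=\det\big(\frac{d^{j-1}f_k}{d\eta^{j-1}}\big)_{1\le j,k\le m}$. For an ordered list $\mathcal{D}=((d_1,t_1),\ldots,(d_M,t_M))$ of seed labels with $M_{\mathrm{I}}$ of Type I and $M_{\mathrm{II}}$ of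 Type II, $\Xi_{\mathcal{D}}(\eta;(g,h))=\mathrm{W}[\mu_{(d_1,t_1)},\ldots,\mu_{(d_M,t_M)}](\eta)\big(\frac{1-\eta}{2}\big)^{(M_{\mathrm{I}}+g-\frac12)M_{\mathrm{II}}}\big(\frac{1+\eta}{2}\big)^{(M_{\mathrm{II}}+h-\frac12)M_{\mathrm{I}}}$ and $P_{\mathcal{D},n}(\eta;(g,h))=\mathrm{W}[\mu_{(d_1,t_1)},\ldots,\mu_{(d_M,t_M)},P_n](\eta)\big(\frac{1-\eta}{2}\big)^{(M_{\mathrm{I}}+g+\frac12)M_{\mathrm{II}}}\big(\frac{1+\eta}{2}\big)^{(M_{\mathrm{II}}+h+\frac12)M_{\mathrm{I}}}$, where all $\mu$'s and $P_n$ are taken at parameters $(g,h)$ (the multi-indexed Jacobi polynomials). These are polynomials in $\eta$, so they may be evaluated at $-\eta$. *)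

From HB Require Import structures.
From mathcomp Require Import all_boot all_order all_algebra.
From mathcomp Require Import all_classical all_reals all_analysis.
Set Implicit Arguments. Unset Strict Implicit. Unset Printing Implicit Defensive.
Import Order.TTheory GRing.Theory Num.Theory.
Local Open Scope ring_scope.

Inductive stype := TI | TII.
Definition stype_eqb (a b : stype) : bool :=
  match a, b with TI, TI | TII, TII => true | _, _ => false end.
Lemma stype_eqP : Equality.axiom stype_eqb.
Proof. by case; case; constructor. Qed.
HB.instance Definition _ := hasDecEq.Build stype stype_eqP.

Definition sflip (t : stype) : stype := match t with TI => TII | TII => TI end.

Section Defs.
Variable R : realType.

Definition glt (a : R) : int := (Num.ceil a - 1)%R.

Definition poch (a : R) (k : nat) : R := \prod_(i < k) (a + i%:R).

Definition jacobiP (al be : R) (m : nat) (eta : R) : R :=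
  (m`!%:R)^-1 * \sum_(k < m.+1)
     poch (- m%:R) k * poch (m%:R + al + be + 1) k * poch (al + k%:R + 1) (m - k)
       / (k`!%:R) * ((1 - eta) / 2) ^+ k.

Definition seed_label (g h : R) (l : nat * stype) : Prop :=
  match l.2 with
  | TI => ((l.1)%:Z <= glt (h - 2^-1))%R
  | TII => ((l.1)%:Z <= glt (g - 2^-1))%R
  end.

Definition mu (g h : R) (l : nat * stype) : R -> R :=
  match l.2 with
  | TI => fun eta => powR ((1 + eta) / 2) (2^-1 - h) * jacobiP (g - 2^-1) (2^-1 - h) l.1 eta
  | TII => fun eta => powR ((1 - eta) / 2) (2^-1 - g) * jacobiP (2^-1 - g) (h - 2^-1) l.1 eta
  end.

Definition Pn (g h : R) (n : nat) : R -> R :=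
  fun eta => jacobiP (g - 2^-1) (h - 2^-1) n eta.

Definition wronskian (fs : seq (R -> R)) (eta : R) : R :=
  \det (\matrix_(j < size fs, k < size fs) derive1n j (nth (fun _ => 0) fs k) eta).

Definition MI (D : seq (nat * stype)) : nat := count (fun l => l.2 == TI) D.
Definition MII (D : seq (nat * stype)) : nat := count (fun l => l.2 == TII) D.

Definition Xi (g h : R) (D : seq (nat * stype)) (eta : R) : R :=
  wronskian (map (mu g h) D) eta
  * powR ((1 - eta) / 2) (((MI D)%:R + g - 2^-1) * (MII D)%:R)
  * powR ((1 + eta) / 2) (((MII D)%:R + h - 2^-1) * (MI D)%:R).

Definition PD (g h : R) (D : seq (nat * stype)) (n : nat) (eta : R) : R :=
  wronskian (rcons (map (mu g h) D) (Pn g h n)) eta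
  * powR ((1 - eta) / 2) (((MI D)%:R + g + 2^-1) * (MII D)%:R)
  * powR ((1 + eta) / 2) (((MII D)%:R + h + 2^-1) * (MI D)%:R).

End Defs.

Definition flipD (D : seq (nat * stype)) : seq (nat * stype) :=
  map (fun l => (l.1, sflip l.2)) D.

From HB Require Import structures.
From mathcomp Require Import all_boot all_order all_algebra.
From mathcomp Require Import all_classical all_reals all_analysis.
From mathcomp Require Import ring.
Set Implicit Arguments. Unset Strict Implicit. Unset Printing Implicit Defensive.
Import Order.TTheory GRing.Theory Num.Theory.
Local Open Scope ring_scope.

(* Jacobi polynomials are reflection symmetric,
   P^(a,b)_m(-x) = (-1)^m P^(b,a)_m(x): expanding ((1+x)/2)^k = (1 - (1-x)/2)^k
   in the explicit sum reduces this to the Chu-Vandermonde identity for falling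
   factorials.  Hence mu_(v,t)(-eta;(g,h)) = (-1)^v mu_(v,tbar)(eta;(h,g)) and
   P_n(-eta;(g,h)) = (-1)^n P_n(eta;(h,g)).  Reflecting the variable multiplies
   the j-th derivative row of a Wronskian by (-1)^j, so a Wronskian of M
   functions picks up (-1)^(M(M-1)/2) times the product of the scalar factors.
   The power prefactors match because flipping the types swaps M_I and M_II. *)

Section FallingFactorial.
Variable R : comPzRingType.

Definition ffactr (x : R) (n : nat) : R := \prod_(i < n) (x - i%:R).

Lemma ffactr0 x : ffactr x 0 = 1.
Proof. by rewrite /ffactr big_ord0. Qed.

Lemma ffactrS x n : ffactr x n.+1 = x * ffactr (x - 1) n.
Proof.
rewrite /ffactr big_ord_recl subr0; congr (_ * _); apply: eq_bigr => i _.
by rewrite lift0 -nat1r opprD addrA.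
Qed.

Lemma ffactrSr x n : ffactr x n.+1 = ffactr x n * (x - n%:R).
Proof. by rewrite /ffactr big_ord_recr. Qed.

Lemma ffactr_nat m n : ffactr m%:R n = (m ^_ n)%:R.
Proof.
elim: n => [|n IHn]; first by rewrite ffactr0.
rewrite ffactrSr IHn ffactnSr natrM.
by have [/natrB-> // | /ffact_small->] := leqP n m; rewrite !mul0r.
Qed.

Lemma ffactrD x y n :
  ffactr (x + y) n = \sum_(i < n.+1) 'C(n, i)%:R * ffactr x i * ffactr y (n - i).
Proof.
elim: n x y => [|n IHn] x y; first by rewrite big_ord1 !ffactr0 bin0 !mulr1.
have Ex : x * ffactr (x - 1 + y) n
    = \sum_(i < n.+1) 'C(n, i)%:R * ffactr x i.+1 * ffactr y (n - i).
  by rewrite IHn mulr_sumr; apply: eq_bigr => i _; rewrite ffactrS; ring.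
have Ey : y * ffactr (x - 1 + y) n
    = \sum_(i < n.+1) 'C(n, i)%:R * ffactr x i * ffactr y (n - i).+1.
  by rewrite addrAC -addrA IHn mulr_sumr; apply: eq_bigr => i _; rewrite ffactrS; ring.
have Exy : x + y - 1 = x - 1 + y by rewrite addrAC.
rewrite ffactrS Exy mulrDl Ex Ey.
rewrite [RHS]big_ord_recl bin0 ffactr0 mul1r subn0.
under [X in _ = _ + X]eq_bigr => i _ do
  rewrite lift0 subSS binS natrD !mulrDl.
rewrite big_split addrA [in RHS]addrC; congr (_ + _).
rewrite [LHS]big_ord_recl bin0 ffactr0 !mul1r subn0.
rewrite [in RHS]big_ord_recr /= bin_small // !mul0r addr0; congr (_ + _).
by apply: eq_bigr => i _; rewrite /bump /= add1n subnSK.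
Qed.

End FallingFactorial.

Lemma natr_fact_neq0 (R : numDomainType) k : k`!%:R != 0 :> R.
Proof. by rewrite pnatr_eq0 -lt0n fact_gt0. Qed.

Section Pochhammer.
Variable R : realType.

Lemma pochSr (a : R) k : poch a k.+1 = poch a k * (a + k%:R).
Proof. by rewrite /poch big_ord_recr. Qed.

Lemma pochD (a : R) p q : poch a (p + q) = poch a p * poch (a + p%:R) q.
Proof.
elim: q => [|q IHq]; first by rewrite addn0 /poch big_ord0 mulr1.
by rewrite addnS !pochSr IHq natrD addrA mulrA.
Qed.

Lemma poch_ffactrN (a : R) k : poch a k = (-1) ^+ k * ffactr (- a) k.
Proof.
rewrite /poch /ffactr -[X in (-1) ^+ X](card_ord k) -prodrN.
by apply: eq_bigr => i _; rewrite opprB opprK addrC.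
Qed.

Lemma poch_ffactr (a : R) k : poch a k = ffactr (a + k%:R - 1) k.
Proof.
elim: k a => [|k IHk] a; first by rewrite /poch big_ord0 ffactr0.
by rewrite pochSr IHk ffactrS -natr1 addrA addrK mulrC.
Qed.

Lemma chu_vandermonde_poch n (c d : R) :
  \sum_(i < n.+1) poch (- n%:R) i / i`!%:R * poch (n%:R + c + d - 1) i
      * poch (c + i%:R) (n - i)
  = (-1) ^+ n * poch d n.
Proof.
have -> : (-1) ^+ n * poch d n = ffactr (- (n%:R + c + d - 1) + (c + n%:R - 1)) n.
  rewrite poch_ffactrN mulrA -expr2 sqrr_sign mul1r; congr ffactr.
  by rewrite !opprD !opprK; ring.
rewrite ffactrD; apply: eq_bigr => i _.
have le_in : (i <= n)%N by rewrite -ltnS.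
rewrite poch_ffactrN opprK ffactr_nat -bin_ffact natrM.
rewrite poch_ffactrN poch_ffactr natrB // -(addrA c) subrKC.
rewrite (mulrA ((-1) ^+ i)) mulfK ?natr_fact_neq0 //.
by rewrite mulrACA -expr2 sqrr_sign mul1r.
Qed.

End Pochhammer.

Section JacobiReflection.
Variable R : realType.

Definition jacobi_coef (a b : R) (m k : nat) : R :=
  poch (- m%:R) k * poch (m%:R + a + b + 1) k * poch (a + k%:R + 1) (m - k)
   / k`!%:R.

Lemma jacobiPE (a b : R) m x :
  jacobiP a b m x
  = (m`!%:R)^-1 * \sum_(k < m.+1) jacobi_coef a b m k * ((1 - x) / 2) ^+ k.
Proof. by []. Qed.

Lemma jacobi_coef_shift (a b : R) n i j :
  jacobi_coef a b (n + j) (i + j) * 'C(i + j, j)%:R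
  = poch (- (n + j)%:R) j * poch ((n + j)%:R + a + b + 1) j / j`!%:R
    * (poch (- n%:R) i / i`!%:R * poch (n%:R + (a + j%:R + 1) + (b + j%:R + 1) - 1) i
       * poch (a + j%:R + 1 + i%:R) (n - i)).
Proof.
have bin_neq0 : 'C(j + i, j)%:R != 0 :> R by rewrite pnatr_eq0 -lt0n bin_gt0 leq_addr.
have fact_split : (j + i)`!%:R = 'C(j + i, j)%:R * (j`!%:R * i`!%:R) :> R.
  by have := bin_fact (leq_addr i j); rewrite addKn => <-; rewrite !natrM.
rewrite /jacobi_coef (addnC i j) !pochD subnDA addnK fact_split.
have -> : - (n + j)%:R + j%:R = - n%:R :> R by rewrite natrD opprD addrNK.
have -> : (n + j)%:R + a + b + 1 + j%:R
    = n%:R + (a + j%:R + 1) + (b + j%:R + 1) - 1 :> R by rewrite natrD; ring.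
have -> : a + (j + i)%:R + 1 = a + j%:R + 1 + i%:R by rewrite natrD; ring.
by field; rewrite bin_neq0 !natr_fact_neq0.
Qed.

Lemma sum_jacobi_coef_binom (a b : R) m j : (j <= m)%N ->
  \sum_(k < m.+1) jacobi_coef a b m k * 'C(k, j)%:R * (-1) ^+ j
  = (-1) ^+ m * jacobi_coef b a m j.
Proof.
(* Only k >= j contributes; reindexing k = i + j leaves a Chu-Vandermonde sum
   with c = a + j + 1 and d = b + j + 1. *)
move=> /subnK <-; set n := (m - j)%N.
rewrite -(big_mkord xpredT (fun k => jacobi_coef a b (n + j) k * 'C(k, j)%:R * (-1) ^+ j)).
rewrite (@big_cat_nat _ _ _ j) //=; last exact/leqW/leq_addl.
rewrite big_nat_cond big1 ?add0r; last first.
  by move=> k /andP[/andP[_ lt_kj] _]; rewrite bin_small // mulr0 mul0r.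
rewrite -{1}(add0n j) big_addn -addSn addnK big_mkord.
under eq_bigr => i _ do rewrite jacobi_coef_shift mulrAC.
rewrite -mulr_sumr chu_vandermonde_poch /jacobi_coef addnK exprD.
have -> : (n + j)%:R + b + a + 1 = (n + j)%:R + a + b + 1 :> R by ring.
move: (poch _ j) (poch _ j) (poch _ n) ((-1) ^+ j) ((-1) ^+ n) (j`!%:R) => A B P s t c.
by ring.
Qed.

Lemma expr1B_binom (t : R) k m : (k <= m)%N ->
  (1 - t) ^+ k = \sum_(j < m.+1) 'C(k, j)%:R * (-1) ^+ j * t ^+ j.
Proof.
move=> le_km; rewrite exprDn.
rewrite (big_ord_widen m.+1 (fun j => 1 ^+ (k - j) * (- t) ^+ j *+ 'C(k, j))) //.
rewrite big_mkcond; apply: eq_bigr => j _; case: ifPn => [_|].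
  by rewrite expr1n mul1r -mulr_natl -mulrA -exprMn mulN1r.
by rewrite -leqNgt => /bin_small->; rewrite !mul0r.
Qed.

Lemma jacobiPN (a b : R) m x : jacobiP a b m (- x) = (-1) ^+ m * jacobiP b a m x.
Proof.
rewrite !jacobiPE (_ : (1 - - x) / 2 = 1 - (1 - x) / 2); last by rewrite opprK; field.
move: ((1 - x) / 2) => t; rewrite mulrCA; congr (_ * _).
under eq_bigr => k _ do rewrite (@expr1B_binom t k m (ltnSE (ltn_ord k))) mulr_sumr.
rewrite exchange_big mulr_sumr; apply: eq_bigr => j _.
rewrite mulrA -sum_jacobi_coef_binom; last by rewrite -ltnS.
rewrite mulr_suml; apply: eq_bigr => k _.
by rewrite !mulrA.
Qed.

End JacobiReflection.

Section ReflectedDerivatives.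
Variable R : realType.
Implicit Types (f : R -> R) (c x : R).

(* [derive1] takes the junk value 0 where [f] is not differentiable, so the
   reflection lemmas below need no differentiability hypothesis. *)
Lemma derive1_nonderivable f x : ~ derivable f x 1 -> derive1 f x = 0.
Proof. by move=> /dvgP nf; rewrite derive1E /derive nf. Qed.

Lemma derivable_compN f x : derivable f (- x) 1 -> derivable (fun y => f (- y)) x 1.
Proof.
move=> /derivable1_diffP df; apply/derivable1_diffP.
by apply: (differentiable_comp _ df); exact/derivable1_diffP/derivable_opp.
Qed.

Lemma derive1_compN f x : derive1 (fun y => f (- y)) x = - derive1 f (- x).
Proof.
have [df|ndf] := pselect (derivable f (- x) 1).
  have dN := @derivable_opp R x 1.
  have dNE : derive1 (-%R : R -> R) x = -1.
    by rewrite derive1E deriveN ?derive_id //; exact: derivable_id.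
  by rewrite (_ : (fun y => f (- y)) = f \o -%R) // derive1_comp // dNE mulrN1.
have ndfN : ~ derivable (fun y => f (- y)) x 1.
  move=> dfN; apply: ndf.
  have -> : f = fun y => (fun z => f (- z)) (- y) by rewrite funeqE => y; rewrite opprK.
  by apply: (@derivable_compN (fun z => f (- z))); rewrite opprK.
by rewrite !derive1_nonderivable ?oppr0.
Qed.

Lemma derive1Zl f c x : derive1 (fun y => c * f y) x = c * derive1 f x.
Proof.
have [df|ndf] := pselect (derivable f x 1); first exact: derive1Ml.
have [->|c_neq0] := eqVneq c 0.
  rewrite mul0r (_ : (fun y => 0 * f y) = cst 0) ?derive1_cst //.
  by rewrite funeqE => y; rewrite mul0r.
have ndcf : ~ derivable (fun y => c * f y) x 1.
  move=> dcf; apply: ndf.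
  have -> : f = fun y => c^-1 * (c * f y) by rewrite funeqE => y; rewrite mulKf.
  exact: (derivableZ (k := c^-1) dcf).
by rewrite !derive1_nonderivable ?mulr0.
Qed.

Lemma derive1n_scale_compN f c j :
  derive1n j (fun y => c * f (- y)) = fun x => (-1) ^+ j * c * derive1n j f (- x).
Proof.
elim: j => [|j IHj]; first by rewrite funeqE => x; rewrite mul1r.
rewrite funeqE => x; rewrite !derive1nS IHj.
rewrite (derive1Zl (fun y => derive1n j f (- y))) derive1_compN.
by rewrite exprS mulrN mulN1r !mulNr.
Qed.

End ReflectedDerivatives.

Definition reflect_scale {R : pzRingType} (p : R * (R -> R)) : R -> R :=
  fun y => p.1 * p.2 (- y).

Section Wronskian.
Variable R : realType.

Lemma wronskian_reflect_scale (ps : seq (R * (R -> R))) eta :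
  wronskian (map reflect_scale ps) (- eta)
  = (-1) ^+ 'C(size ps, 2) * \prod_(p <- ps) p.1 * wronskian (map snd ps) eta.
Proof.
rewrite /wronskian !size_map; set n := size ps.
pose p0 : R * (R -> R) := (0, fun _ => 0).
have -> : \matrix_(j < n, k < n) derive1n j (nth (fun _ => 0) (map reflect_scale ps) k) (- eta)
   = diag_mx (\row_(j < n) (-1) ^+ j)
     *m (\matrix_(j < n, k < n) derive1n j (nth (fun _ => 0) (map snd ps) k) eta)
     *m diag_mx (\row_(k < n) (nth p0 ps k).1).
  apply/matrixP => j k; rewrite mul_mx_diag mul_diag_mx !mxE.
  by rewrite !(nth_map p0) // derive1n_scale_compN opprK mulrAC.
rewrite !det_mulmx !det_diag.
have -> : \prod_(j < n) (\row_(j < n) (-1) ^+ j : 'rV[R]_n) 0 j = (-1) ^+ 'C(n, 2).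
  by under eq_bigr => j _ do rewrite mxE; rewrite prodrXr -bin2_sum big_mkord.
rewrite (eq_bigr (fun k : 'I_n => (nth p0 ps k).1)) => [|k _]; last by rewrite mxE.
by rewrite -(big_mkord xpredT (fun k => (nth p0 ps k).1)) -(big_nth p0 xpredT) mulrAC.
Qed.

End Wronskian.

Section SeedReflection.
Variables (R : realType) (g h : R).

Definition reflect_seed (l : nat * stype) : R * (R -> R) :=
  ((-1) ^+ l.1, mu h g (l.1, sflip l.2)).

Lemma mu_reflect l : mu g h l = reflect_scale (reflect_seed l).
Proof.
case: l => v [] /=; rewrite funeqE => y.
  by rewrite /reflect_scale /reflect_seed /mu /= opprK jacobiPN [RHS]mulrCA signrMK.
by rewrite /reflect_scale /reflect_seed /mu /= jacobiPN [RHS]mulrCA signrMK.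
Qed.

Lemma Pn_reflect n : Pn g h n = reflect_scale ((-1) ^+ n, Pn h g n).
Proof.
by rewrite funeqE => y; rewrite /reflect_scale /Pn /= jacobiPN signrMK.
Qed.

Lemma MI_flipD D : MI (flipD D) = MII D.
Proof. by rewrite /MI /MII /flipD count_map; apply: eq_count => -[v []]. Qed.

Lemma MII_flipD D : MII (flipD D) = MI D.
Proof. by rewrite /MI /MII /flipD count_map; apply: eq_count => -[v []]. Qed.

Lemma map_mu_reflect D : map (mu g h) D = map reflect_scale (map reflect_seed D).
Proof. by rewrite -map_comp; apply: eq_map => l; rewrite /= mu_reflect. Qed.

Lemma map_snd_reflect_seed D : map snd (map reflect_seed D) = map (mu h g) (flipD D).
Proof. by rewrite /flipD -!map_comp. Qed.

Lemma prod_reflect_seed D :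
  \prod_(p <- map reflect_seed D) p.1 = (-1) ^+ (\sum_(l <- D) l.1).
Proof. by rewrite big_map prodrXr. Qed.

Lemma wronskian_mu_opp D eta :
  wronskian (map (mu g h) D) (- eta)
  = (-1) ^+ ('C(size D, 2) + \sum_(l <- D) l.1) * wronskian (map (mu h g) (flipD D)) eta.
Proof.
rewrite map_mu_reflect wronskian_reflect_scale map_snd_reflect_seed size_map.
by rewrite prod_reflect_seed exprD.
Qed.

Lemma wronskian_mu_Pn_opp D n eta :
  wronskian (rcons (map (mu g h) D) (Pn g h n)) (- eta)
  = (-1) ^+ (n + 'C((size D).+1, 2) + \sum_(l <- D) l.1)
    * wronskian (rcons (map (mu h g) (flipD D)) (Pn h g n)) eta.
Proof.
rewrite map_mu_reflect Pn_reflect -map_rcons wronskian_reflect_scale.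
rewrite map_rcons map_snd_reflect_seed size_rcons size_map.
rewrite -cats1 big_cat big_seq1 prod_reflect_seed /= -!exprD.
by rewrite addnCA addnC [('C(_, _) + n)%N]addnC.
Qed.

End SeedReflection.

Theorem mainTheorem5 (R : realType) (g h : R) (D : seq (nat * stype)) :
  2^-1 < g -> 2^-1 < h ->
  (forall l, l \in D -> seed_label g h l) ->
  uniq D ->
  (forall (n : nat) (eta : R), -1 < eta < 1 ->
     PD g h D n (- eta) =
     (-1) ^+ (n + (size D * (size D).+1)./2 + \sum_(l <- D) l.1)%N
       * PD h g (flipD D) n eta)
  /\
  (forall eta : R, -1 < eta < 1 ->
     Xi g h D (- eta) =
     (-1) ^+ ((size D * (size D).-1)./2 + \sum_(l <- D) l.1)%N
       * Xi h g (flipD D) eta).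
Proof.
move=> _ _ _ _; split=> [n eta _ | eta _].
  rewrite /PD wronskian_mu_Pn_opp MI_flipD MII_flipD opprK bin2 [(_.+1 * _)%N]mulnC.
  by rewrite !mulrA [RHS]mulrAC.
rewrite /Xi wronskian_mu_opp MI_flipD MII_flipD opprK bin2.
by rewrite !mulrA [RHS]mulrAC.
Qed.
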